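(* Let $J=\begin{bmatrix}0&I_m\\-I_m&0\end{bmatrix}$, let $H\in\mathbb{R}^{2m\times2m}$ be symmetric positive definite, and let $A=JH$, $y_0\in\mathbb{R}^{2m}$. Let $V_n\in\mathbb{R}^{2m\times n}$ be the matrix whose columns are the $H$-orthonormal basis of the Krylov subspace $\mathcal{K}_n(A,y_0)=\mathrm{span}\{y_0,Ay_0,\dots,A^{n-1}y_0\}$ produced by the Arnoldi algorithm run with the inner product $\langle x,y\rangle_H=x^THy$ (so $V_n^THV_n=I_n$), and let $H_n=V_n^THAV_n$ be the corresponding $n\times n$ upper Hessenberg matrix. Define $y_H(t)=V_nz(t)$, where $\dot z=H_nz$, $z(0)=V_n^THy_0$. Then for every $k=0,1,\dots,r$ with $r=\lfloor n/2\rfloor-1$, the quantity $$\mathcal{H}_k(y_H)=\tfrac12\, y_H^T H V_n (H_n)^{2k} V_n^T H y_H$$ is constant in $t$ along $y_H(t)$.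
   Context: The Arnoldi algorithm with inner product $\langle\cdot,\cdot\rangle_H$: $v_1=y_0/\langle y_0,y_0\rangle_H^{1/2}$; for $j=1,\dots,n$: $w_j=Av_j$, $h_{i,j}=\langle v_i,w_j\rangle_H$ and $w_j\leftarrow w_j-h_{i,j}v_i$ for $i\le j$, $h_{j+1,j}=\langle w_j,w_j\rangle_H^{1/2}$, $v_{j+1}=w_j/h_{j+1,j}$ (assumed no breakdown). $V_n=[v_1,\dots,v_n]$, $H_n=(h_{i,j})_{i,j\le n}$, and $AV_n=V_nH_n+h_{n+1,n}v_{n+1}e_n^T$ with $V_n^THv_{n+1}=0$. *)

(* real matrices/vectors are represented as functions on nat
   indices (0-based); only indices below the relevant dimension are ever used. *)
From Stdlib Require Import Reals List Arith.
Open Scope R_scope.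

Fixpoint sumR (n : nat) (f : nat -> R) : R :=
  match n with O => 0 | S k => sumR k f + f k end.

Definition Vec := nat -> R.
Definition Mat := nat -> nat -> R.

Definition dot (N : nat) (x y : Vec) : R := sumR N (fun i => x i * y i).
Definition mv (N : nat) (M : Mat) (x : Vec) : Vec :=
  fun i => sumR N (fun j => M i j * x j).
Definition mm (K : nat) (A B : Mat) : Mat :=
  fun i j => sumR K (fun l => A i l * B l j).
Definition tr (M : Mat) : Mat := fun i j => M j i.
Definition idm : Mat := fun i j => if Nat.eqb i j then 1 else 0.
Fixpoint mpow (K : nat) (M : Mat) (p : nat) : Mat :=
  match p with O => idm | S q => mm K M (mpow K M q) end.

(* J = [[0, I_m], [-I_m, 0]] *)
Definition Jmat (m : nat) : Mat := fun i j =>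
  if (i <? m)%nat then (if Nat.eqb j (i + m) then 1 else 0)
  else if (i <? 2 * m)%nat then (if Nat.eqb j (i - m) then -1 else 0)
  else 0.

Definition symmetric (N : nat) (M : Mat) : Prop :=
  forall i j, (i < N)%nat -> (j < N)%nat -> M i j = M j i.
Definition pos_def (N : nat) (M : Mat) : Prop :=
  forall x : Vec, (exists i, (i < N)%nat /\ x i <> 0) -> 0 < dot N x (mv N M x).

Definition ipH (N : nat) (H : Mat) (x y : Vec) : R := dot N x (mv N H y).
Definition vsub (x y : Vec) : Vec := fun i => x i - y i.
Definition vscale (a : R) (x : Vec) : Vec := fun i => a * x i.
Definition vzero : Vec := fun _ => 0.

(* modified Gram-Schmidt step of Arnoldi: for i = 1..j,
   h_{i,j} = <v_i, w>_H ; w <- w - h_{i,j} v_i *)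
Fixpoint mgs (N : nat) (H : Mat) (vs : list Vec) (w : Vec) : Vec :=
  match vs with
  | nil => w
  | v :: vs' => mgs N H vs' (vsub w (vscale (ipH N H v w) v))
  end.

Definition arnoldi_w (N : nat) (A H : Mat) (vs : list Vec) : Vec :=
  mgs N H vs (mv N A (last vs vzero)).

(* arnoldi N A H y0 j = [v_1; ...; v_{j+1}] *)
Fixpoint arnoldi (N : nat) (A H : Mat) (y0 : Vec) (j : nat) : list Vec :=
  match j with
  | O => vscale (/ sqrt (ipH N H y0 y0)) y0 :: nil
  | S j' => let vs := arnoldi N A H y0 j' in
            let w := arnoldi_w N A H vs in
            vs ++ (vscale (/ sqrt (ipH N H w w)) w :: nil)
  end.

(* no breakdown: y0 <> 0 and h_{j+1,j} <> 0 for j = 1..n-1 *)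
Definition no_breakdown (N n : nat) (A H : Mat) (y0 : Vec) : Prop :=
  ipH N H y0 y0 <> 0 /\
  forall j, (j + 1 < n)%nat ->
    ipH N H (arnoldi_w N A H (arnoldi N A H y0 j))
            (arnoldi_w N A H (arnoldi N A H y0 j)) <> 0.

Section Setup.
Variables (m n : nat) (H : Mat) (y0 : Vec).
Definition Ndim : nat := 2 * m.
Definition Amat : Mat := mm Ndim (Jmat m) H.
(* V_n : 2m x n, column j (0-based) is v_{j+1} *)
Definition Vn : Mat := fun i j =>
  nth j (arnoldi Ndim Amat H y0 (n - 1)) vzero i.
Definition Hn : Mat := mm Ndim (mm Ndim (tr Vn) H) (mm Ndim Amat Vn).
Definition z0 : Vec := mv Ndim (mm Ndim (tr Vn) H) y0.
Definition yH (z : Vec) : Vec := fun i => sumR n (fun j => Vn i j * z j).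
Definition Hk (k : nat) (y : Vec) : R :=
  / 2 * dot Ndim y
    (mv Ndim (mm n (mm n (mm Ndim H Vn) (mpow n Hn (2 * k)))
                   (mm Ndim (tr Vn) H)) y).
End Setup.

From Stdlib Require Import Reals List Arith Lia Lra Classical.
Open Scope R_scope.

(* The Arnoldi vectors are H-orthonormal, so for y = V_n z the quantity
   H_k(y) collapses to z^T (H_n)^(2k) z / 2.  Since H is symmetric and J skew,
   H J H is skew, hence so is H_n = V_n^T (H J H) V_n.  Along z' = H_n z the
   derivative of z^T M z is z^T (H_n^T M + M H_n) z, which vanishes for
   M = (H_n)^(2k) because H_n^T = - H_n commutes with its own powers.  In
   particular the bound k <= n/2 - 1 and the initial value of z play no role. *)

Lemma sumR_ext n f g :
  (forall i, (i < n)%nat -> f i = g i) -> sumR n f = sumR n g.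
Proof.
  induction n; intros E; simpl; [reflexivity|].
  rewrite IHn, E; auto; intros; apply E; lia.
Qed.

Lemma sumR_add n f g : sumR n (fun i => f i + g i) = sumR n f + sumR n g.
Proof. induction n; simpl; [lra|]. rewrite IHn; ring. Qed.

Lemma sumR_mult_l n c f : sumR n (fun i => c * f i) = c * sumR n f.
Proof. induction n; simpl; [ring|]. rewrite IHn; ring. Qed.

Lemma sumR_mult_r n c f : sumR n (fun i => f i * c) = sumR n f * c.
Proof. induction n; simpl; [ring|]. rewrite IHn; ring. Qed.

Lemma sumR_opp n f : sumR n (fun i => - f i) = - sumR n f.
Proof. induction n; simpl; [ring|]. rewrite IHn; ring. Qed.

Lemma sumR_zero n : sumR n (fun _ => 0) = 0.
Proof. induction n; simpl; [ring|]. rewrite IHn; ring. Qed.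

Lemma sumR_exchange n m (f : nat -> nat -> R) :
  sumR n (fun i => sumR m (fun j => f i j)) =
  sumR m (fun j => sumR n (fun i => f i j)).
Proof.
  induction n; simpl.
  - now rewrite sumR_zero.
  - now rewrite IHn, sumR_add.
Qed.

Lemma sumR_kronecker K i f :
  (i < K)%nat -> sumR K (fun l => (if Nat.eqb i l then 1 else 0) * f l) = f i.
Proof.
  induction K; intros Hi; [lia|]. simpl.
  destruct (Nat.eq_dec i K) as [->|Hne].
  - rewrite Nat.eqb_refl, (sumR_ext _ _ (fun _ => 0)), sumR_zero; [ring|].
    intros l Hl. destruct (Nat.eqb_spec K l); [lia|ring].
  - rewrite IHK by lia. destruct (Nat.eqb_spec i K); [lia|ring].
Qed.

Lemma derivable_pt_lim_sumR n (f : nat -> R -> R) (d : nat -> R) t :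
  (forall i, (i < n)%nat -> derivable_pt_lim (f i) t (d i)) ->
  derivable_pt_lim (fun s => sumR n (fun i => f i s)) t (sumR n d).
Proof.
  induction n; intros Hd; simpl.
  - exact (derivable_pt_lim_const 0 t).
  - apply (derivable_pt_lim_plus _ _ t); auto.
Qed.

Lemma dot_ext N x y x' y' :
  (forall i, (i < N)%nat -> x i = x' i) -> (forall i, (i < N)%nat -> y i = y' i) ->
  dot N x y = dot N x' y'.
Proof. intros Ex Ey; apply sumR_ext; intros; rewrite Ex, Ey; auto. Qed.

Lemma dot_comm N x y : dot N x y = dot N y x.
Proof. apply sumR_ext; intros; ring. Qed.

Lemma mv_mm N K A B x i : mv N (mm K A B) x i = mv K A (mv N B x) i.
Proof.
  unfold mv, mm.
  rewrite (sumR_ext N _ (fun j => sumR K (fun l => A i l * B l j * x j)))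
    by (intros; now rewrite <- sumR_mult_r).
  rewrite sumR_exchange. apply sumR_ext; intros l _.
  rewrite <- sumR_mult_l. apply sumR_ext; intros; ring.
Qed.

Lemma dot_mv N K x A u :
  dot N x (mv K A u) = dot K (fun l => sumR N (fun i => x i * A i l)) u.
Proof.
  unfold dot, mv.
  rewrite (sumR_ext N _ (fun i => sumR K (fun l => x i * A i l * u l))).
  2:{ intros; rewrite <- sumR_mult_l; apply sumR_ext; intros; ring. }
  rewrite sumR_exchange. apply sumR_ext; intros l _. now rewrite <- sumR_mult_r.
Qed.

Lemma dot_mv_l N A x y : dot N (mv N A x) y = dot N x (mv N (tr A) y).
Proof.
  rewrite dot_comm, dot_mv, dot_comm.
  apply dot_ext; intros; auto. unfold mv, tr; apply sumR_ext; intros; ring.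
Qed.

Lemma mm_assoc K A B C i j : mm K (mm K A B) C i j = mm K A (mm K B C) i j.
Proof.
  unfold mm.
  rewrite (sumR_ext K _ (fun l => sumR K (fun p => A i p * B p l * C l j)))
    by (intros; now rewrite <- sumR_mult_r).
  rewrite sumR_exchange. apply sumR_ext; intros p _.
  rewrite <- sumR_mult_l. apply sumR_ext; intros; ring.
Qed.

Lemma mpow_commute K A p i j : (i < K)%nat -> (j < K)%nat ->
  mm K (mpow K A p) A i j = mm K A (mpow K A p) i j.
Proof.
  revert i j; induction p; intros i j Hi Hj; simpl.
  - unfold mm, idm. rewrite sumR_kronecker by auto.
    rewrite <- (sumR_kronecker K j (fun l => A i l)) by auto.
    apply sumR_ext; intros l _. rewrite Nat.eqb_sym; ring.
  - rewrite mm_assoc. unfold mm at 1 3. apply sumR_ext; intros l Hl.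
    f_equal. now apply IHp.
Qed.

Definition skew (N : nat) (K : Mat) : Prop :=
  forall b c, (b < N)%nat -> (c < N)%nat -> K c b = - K b c.

Lemma dot_skew N K x y : skew N K -> dot N x (mv N K y) = - dot N y (mv N K x).
Proof.
  intros HK. rewrite dot_mv. unfold dot. rewrite <- sumR_opp.
  apply sumR_ext; intros c Hc. unfold mv.
  rewrite <- sumR_mult_r, <- sumR_mult_l, <- sumR_opp.
  apply sumR_ext; intros b Hb. rewrite (HK b c) by auto. ring.
Qed.

Lemma Jmat_skew m : skew (2 * m) (Jmat m).
Proof.
  intros a d Ha Hd. unfold Jmat.
  repeat match goal with
  | |- context [Nat.ltb ?x ?y] => destruct (Nat.ltb_spec x y)
  | |- context [Nat.eqb ?x ?y] => destruct (Nat.eqb_spec x y)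
  end; first [lra | exfalso; lia].
Qed.

Lemma skew_congr_symmetric N H K :
  symmetric N H -> skew N K -> skew N (mm N H (mm N K H)).
Proof.
  intros HH HK b c Hb Hc. unfold mm.
  rewrite (sumR_ext _ _ (fun a => sumR N (fun d => H c a * (K a d * H d b))))
    by (intros; apply eq_sym, sumR_mult_l).
  rewrite sumR_exchange, <- sumR_opp. apply sumR_ext; intros x Hx.
  rewrite <- sumR_mult_l, <- sumR_opp. apply sumR_ext; intros y Hy.
  rewrite (HK x y), (HH c y), (HH x b) by auto. ring.
Qed.

Lemma skew_mpow_anticommute K S p : skew K S ->
  forall i j, (i < K)%nat -> (j < K)%nat ->
  mm K (tr S) (mpow K S p) i j = - mm K (mpow K S p) S i j.
Proof.
  intros HS i j Hi Hj. rewrite mpow_commute by auto.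
  unfold mm, tr. rewrite <- sumR_opp.
  apply sumR_ext; intros l Hl. rewrite (HS i l) by auto. ring.
Qed.

Lemma quad_form_conserved N S M (z : R -> Vec) :
  (forall t i, (i < N)%nat -> derivable_pt_lim (fun s => z s i) t (mv N S (z t) i)) ->
  (forall i j, (i < N)%nat -> (j < N)%nat -> mm N (tr S) M i j = - mm N M S i j) ->
  forall t1 t2, dot N (z t1) (mv N M (z t1)) = dot N (z t2) (mv N M (z t2)).
Proof.
  intros Hode Hanti.
  set (Q := fun s => dot N (z s) (mv N M (z s))).
  assert (Hflat : forall x, dot N (mv N S x) (mv N M x) + dot N x (mv N M (mv N S x)) = 0).
  { intros x. rewrite dot_mv_l. unfold dot. rewrite <- sumR_add, <- (sumR_zero N).
    apply sumR_ext; intros i Hi. rewrite <- !mv_mm.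
    assert (E : mv N (mm N (tr S) M) x i = - mv N (mm N M S) x i).
    { unfold mv. rewrite <- sumR_opp. apply sumR_ext; intros j Hj.
      rewrite Hanti by auto. ring. }
    rewrite E. ring. }
  assert (HQ' : forall t, derivable_pt_lim Q t 0).
  { intros t. rewrite <- (Hflat (z t)). unfold dot at 1 2. rewrite <- sumR_add.
    apply (derivable_pt_lim_sumR N (fun p s => z s p * mv N M (z s) p)).
    intros p Hp. apply (derivable_pt_lim_mult (fun s => z s p)); [now apply Hode|].
    apply (derivable_pt_lim_sumR N (fun j s => M p j * z s j)).
    intros j Hj. exact (derivable_pt_lim_scal (fun s => z s j) (M p j) t _ (Hode t j Hj)). }
  intros t1 t2.
  pose (pr := fun t => exist (fun l => derivable_pt_abs Q t l) 0 (HQ' t)).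
  exact (null_derivative_1 Q pr (fun t => eq_refl) t1 t2).
Qed.

Section HOrthonormal.
Variables (N : nat) (H : Mat).
Hypothesis Hsym : symmetric N H.

Lemma ipH_sym x y : ipH N H x y = ipH N H y x.
Proof.
  unfold ipH. rewrite dot_mv. apply sumR_ext; intros i Hi.
  rewrite Rmult_comm. f_equal. apply sumR_ext; intros j Hj.
  rewrite (Hsym j i) by auto. ring.
Qed.

Lemma ipH_sub x w u : ipH N H x (vsub w u) = ipH N H x w - ipH N H x u.
Proof.
  unfold ipH, dot, mv, vsub, Rminus. rewrite <- sumR_opp, <- sumR_add.
  apply sumR_ext; intros i _.
  rewrite Ropp_mult_distr_r, <- Rmult_plus_distr_l, <- sumR_opp, <- sumR_add.
  f_equal. apply sumR_ext; intros; ring.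
Qed.

Lemma ipH_scale x c u : ipH N H x (vscale c u) = c * ipH N H x u.
Proof.
  unfold ipH, dot, mv, vscale. rewrite <- sumR_mult_l. apply sumR_ext; intros i _.
  rewrite (sumR_ext _ _ (fun j => c * (H i j * u j))) by (intros; ring).
  rewrite sumR_mult_l; ring.
Qed.

Definition H_orthonormal (l : list Vec) : Prop :=
  forall p q, (p < length l)%nat -> (q < length l)%nat ->
  ipH N H (nth p l vzero) (nth q l vzero) = if Nat.eqb p q then 1 else 0.

Lemma ipH_mgs_orthogonal vs : forall w y,
  (forall v, In v vs -> ipH N H y v = 0) -> ipH N H y (mgs N H vs w) = ipH N H y w.
Proof.
  induction vs as [|v vs IH]; intros w y Hy; simpl; [reflexivity|].
  rewrite IH by (intros; apply Hy; simpl; auto).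
  rewrite ipH_sub, ipH_scale, (Hy v) by (simpl; auto). ring.
Qed.

Lemma mgs_orthogonal vs : forall w, H_orthonormal vs ->
  forall p, (p < length vs)%nat -> ipH N H (nth p vs vzero) (mgs N H vs w) = 0.
Proof.
  induction vs as [|v vs IH]; intros w Hon p Hp; simpl in Hp; [lia|].
  simpl mgs. destruct p as [|p]; simpl nth.
  - rewrite ipH_mgs_orthogonal.
    + pose proof (Hon 0%nat 0%nat) as Hv; simpl in Hv.
      rewrite ipH_sub, ipH_scale, Hv by lia. ring.
    + intros v' Hin. destruct (In_nth vs v' vzero Hin) as [q [Hq <-]].
      apply (Hon 0%nat (S q)); simpl; lia.
  - apply IH; [|lia].
    intros a b Ha Hb. apply (Hon (S a) (S b)); simpl; lia.
Qed.

Lemma H_orthonormal_snoc vs u : H_orthonormal vs ->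
  (forall p, (p < length vs)%nat -> ipH N H (nth p vs vzero) u = 0) ->
  ipH N H u u = 1 -> H_orthonormal (vs ++ u :: nil).
Proof.
  intros Hon Hort Hu p q Hp Hq. rewrite length_app in Hp, Hq. simpl in Hp, Hq.
  destruct (Nat.lt_ge_cases p (length vs)) as [Hpl|Hpl];
  destruct (Nat.lt_ge_cases q (length vs)) as [Hql|Hql].
  - rewrite !app_nth1 by auto. now apply Hon.
  - replace q with (length vs) by lia.
    rewrite app_nth1, app_nth2, Nat.sub_diag by lia. simpl.
    rewrite Hort by auto. destruct (Nat.eqb_spec p (length vs)); [lia|reflexivity].
  - replace p with (length vs) by lia.
    rewrite (app_nth1 _ _ _ Hql), app_nth2, Nat.sub_diag by lia. simpl.
    rewrite ipH_sym, Hort by auto.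
    destruct (Nat.eqb_spec (length vs) q); [lia|reflexivity].
  - replace p with (length vs) by lia. replace q with (length vs) by lia.
    rewrite app_nth2, Nat.sub_diag, Nat.eqb_refl by lia. exact Hu.
Qed.

Hypothesis Hpd : pos_def N H.

Lemma ipH_self_pos x : ipH N H x x <> 0 -> 0 < ipH N H x x.
Proof.
  intros Hne. destruct (classic (exists i, (i < N)%nat /\ x i <> 0)) as [Ex|Nex].
  - now apply Hpd.
  - exfalso; apply Hne. unfold ipH, dot. rewrite <- (sumR_zero N).
    apply sumR_ext; intros i Hi. destruct (Req_dec (x i) 0) as [->|Hx]; [ring|].
    exfalso; apply Nex; eauto.
Qed.

Lemma ipH_normalize w : ipH N H w w <> 0 ->
  let u := vscale (/ sqrt (ipH N H w w)) w in ipH N H u u = 1.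
Proof.
  intros Hne u. pose proof (ipH_self_pos w Hne) as Hp.
  unfold u. rewrite ipH_scale, (ipH_sym (vscale _ w) w), ipH_scale.
  pose proof (sqrt_lt_R0 _ Hp) as Hs. pose proof (sqrt_sqrt _ (Rlt_le _ _ Hp)) as Hss.
  set (s := ipH N H w w) in *. set (r := sqrt s) in *. rewrite <- Hss. field. lra.
Qed.

End HOrthonormal.

Lemma arnoldi_length N A H y0 j : length (arnoldi N A H y0 j) = S j.
Proof. induction j; simpl; auto. rewrite length_app, IHj; simpl; lia. Qed.

Lemma arnoldi_H_orthonormal N A H y0 n :
  symmetric N H -> pos_def N H -> no_breakdown N n A H y0 ->
  forall j, (j < n)%nat -> H_orthonormal N H (arnoldi N A H y0 j).
Proof.
  intros Hs Hp [Hy0 Hw]. induction j; intros Hj.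
  - intros p q Hp' Hq'. simpl in Hp', Hq'.
    replace p with 0%nat by lia. replace q with 0%nat by lia.
    now apply ipH_normalize.
  - simpl. apply H_orthonormal_snoc; auto.
    + apply IHj; lia.
    + intros p Hp'. unfold arnoldi_w. rewrite ipH_scale, mgs_orthogonal; auto; [ring|].
      apply IHj; lia.
    + apply ipH_normalize; auto. apply Hw; lia.
Qed.

Lemma mv_orthonormal_columns_left_inverse N n H V w p :
  (forall p q, (p < n)%nat -> (q < n)%nat ->
     ipH N H (fun i => V i p) (fun i => V i q) = if Nat.eqb p q then 1 else 0) ->
  (p < n)%nat -> mv N (mm N (tr V) H) (mv n V w) p = w p.
Proof.
  intros Hcol Hp. rewrite mv_mm.
  change (dot N (fun i => V i p) (mv N H (mv n V w)) = w p).
  rewrite dot_mv, dot_mv.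
  transitivity (dot n (fun l => if Nat.eqb p l then 1 else 0) w);
    [|apply sumR_kronecker; auto].
  apply dot_ext; intros l Hl; auto.
  rewrite <- (Hcol p l) by auto. unfold ipH. now rewrite dot_mv.
Qed.

Lemma quad_form_sandwich N n H V M y : symmetric N H ->
  let u := mv N (mm N (tr V) H) y in
  dot N y (mv N (mm n (mm n (mm N H V) M) (mm N (tr V) H)) y) = dot n u (mv n M u).
Proof.
  intros HH u.
  rewrite (dot_ext N y _ y (mv n (mm N H V) (mv n M u))); auto.
  2:{ intros i _. now rewrite !mv_mm. }
  rewrite dot_mv. apply dot_ext; intros l Hl; auto.
  unfold u. rewrite mv_mm. unfold mv, mm, tr.
  rewrite (sumR_ext _ _ (fun i => sumR N (fun b => y i * H i b * V b l)))
    by (intros; rewrite <- sumR_mult_l; apply sumR_ext; intros; ring).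
  rewrite sumR_exchange. apply sumR_ext; intros b Hb.
  rewrite <- sumR_mult_l. apply sumR_ext; intros i Hi. rewrite (HH i b) by auto. ring.
Qed.

Section ArnoldiHamiltonian.
Variables (m n : nat) (H : Mat) (y0 : Vec).
Hypothesis Hsym : symmetric (Ndim m) H.

Lemma Hn_skew : skew n (Hn m n H y0).
Proof.
  assert (E : forall p q, Hn m n H y0 p q =
    dot (Ndim m) (fun i => Vn m n H y0 i p)
      (mv (Ndim m) (mm (Ndim m) H (Amat m H)) (fun i => Vn m n H y0 i q))).
  { intros p q.
    transitivity (dot (Ndim m) (fun i => Vn m n H y0 i p)
      (mv (Ndim m) H (mv (Ndim m) (Amat m H) (fun i => Vn m n H y0 i q)))).
    { now rewrite dot_mv. }
    apply dot_ext; intros; [reflexivity|]. symmetry; apply mv_mm. }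
  intros p q _ _. rewrite !E. apply dot_skew, skew_congr_symmetric; auto.
  apply Jmat_skew.
Qed.

Hypothesis Hpd : pos_def (Ndim m) H.
Hypothesis Hnb : no_breakdown (Ndim m) n (Amat m H) H y0.

Lemma Vn_H_orthonormal p q : (p < n)%nat -> (q < n)%nat ->
  ipH (Ndim m) H (fun i => Vn m n H y0 i p) (fun i => Vn m n H y0 i q) =
  if Nat.eqb p q then 1 else 0.
Proof.
  intros Hp Hq.
  apply (arnoldi_H_orthonormal _ _ _ _ n Hsym Hpd Hnb (n - 1)); [lia| |];
    rewrite arnoldi_length; lia.
Qed.

Lemma Hk_yH k w :
  Hk m n H y0 k (yH m n H y0 w) = / 2 * dot n w (mv n (mpow n (Hn m n H y0) (2 * k)) w).
Proof.
  unfold Hk. f_equal. rewrite quad_form_sandwich by auto.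
  apply dot_ext; intros i Hi; [|apply sumR_ext; intros j Hj; f_equal];
    apply mv_orthonormal_columns_left_inverse; auto; intros; now apply Vn_H_orthonormal.
Qed.

End ArnoldiHamiltonian.

Theorem proposition2 (m n : nat) (H : Mat) (y0 : Vec)
  (Hsym : symmetric (Ndim m) H) (Hpd : pos_def (Ndim m) H)
  (Hnb : no_breakdown (Ndim m) n (Amat m H) H y0)
  (z : R -> Vec)
  (Hode : forall (t : R) (i : nat), (i < n)%nat ->
     derivable_pt_lim (fun s => z s i) t
       (sumR n (fun j => Hn m n H y0 i j * z t j)))
  (Hinit : forall i : nat, (i < n)%nat -> z 0 i = z0 m n H y0 i) :
  forall k : nat, (2 * (k + 1) <= n)%nat ->
  forall t1 t2 : R,
    Hk m n H y0 k (yH m n H y0 (z t1)) = Hk m n H y0 k (yH m n H y0 (z t2)).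
Proof.
  intros k _ t1 t2.
  rewrite !Hk_yH by auto. f_equal.
  apply (quad_form_conserved n (Hn m n H y0)); [exact Hode|].
  apply skew_mpow_anticommute, Hn_skew, Hsym.
Qed.
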